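(* Let $D\subset\mathbb{C}^n$ be a bounded homogeneous domain with $0\in D$, let $\mu:D\to(0,\infty)$ be a weight, let $\psi\in H(D)$ and let $\varphi$ be a holomorphic self-map of $D$. If the weighted composition operator $W_{\psi,\varphi}:\mathcal{B}(D)\to H^\infty_\mu(D)$, $W_{\psi,\varphi}f=\psi\,(f\circ\varphi)$, is bounded, then $$\upsilon_{0,\mu}(\psi,\varphi)\le \upsilon_\mu(\psi,\varphi)\le \|W_{\psi,\varphi}\|,$$ where $\upsilon_\mu(\psi,\varphi)=\sup_{z\in D}\mu(z)|\psi(z)|\,\omega(\varphi(z))$ and $\upsilon_{0,\mu}(\psi,\varphi)=\sup_{z\in D}\mu(z)|\psi(z)|\,\omega_0(\varphi(z))$.
   Context: $H(D)$ denotes the holomorphic functions $D\to\mathbb{C}$. A domain is homogeneous if its group of biholomorphic automorphisms acts transitively. A weight is a continuous strictly positive function $\mu:D\to(0,\infty)$; $H^\infty_\mu(D)=\{f\in H(D):\|f\|_{H^\infty_\mu}=\sup_{z\in D}\mu(z)|f(z)|<\infty\}$. For $f\in H(D)$ and $z\in D$, $Q_f(z)=\sup_{u\in\mathbb{C}^n\setminus\{0\}}\frac{|\nabla f(z)u|}{H_z(u,\bar u)^{1/2}}$, where $\nabla f(z)u=\sum_k \frac{\partial f}{\partial z_k}(z)u_k$ and $H_z$ is the Bergman metric of $D$ at $z$. The Bloch space is $\mathcal{B}(D)=\{f\in H(D):\beta_f=\sup_{z\in D}Q_f(z)<\infty\}$ with norm $\|f\|_{\mathcal{B}}=|f(0)|+\beta_f$.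 The $*$-little Bloch space is $\mathcal{B}_{0*}(D)=\{f\in\mathcal{B}(D):\lim_{z\to\partial^* D}Q_f(z)=0\}$, where $\partial^*D$ is the distinguished boundary of $D$. For $z\in D$: $\omega(z)=\sup\{|f(z)|: f\in\mathcal{B}(D), f(0)=0, \|f\|_{\mathcal{B}}\le 1\}$ and $\omega_0(z)=\sup\{|f(z)|: f\in\mathcal{B}_{0*}(D), f(0)=0, \|f\|_{\mathcal{B}}\le 1\}$ (both are finite). *)

(* C^n is 'rV[R[i]]_n for R : realType,
   with R[i] the complex numbers of mathcomp-real-closed (complex.v). *)
From HB Require Import structures.
From mathcomp Require Import all_boot all_order all_algebra.
From mathcomp Require Import all_classical all_reals all_analysis.
From mathcomp Require Import complex.
Set Warnings "-redundant-canonical-projection -notation-overridden -ambiguous-paths -notation-incompatible-prefix".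
Import Order.TTheory GRing.Theory Num.Theory.
Import numFieldTopology.Exports numFieldNormedType.Exports.

Set Implicit Arguments.
Unset Strict Implicit.
Unset Printing Implicit Defensive.

Local Open Scope ring_scope.
Local Open Scope classical_set_scope.

(* The complex numbers R[i] as a normed module over themselves (standard
   absolute-value topology), so that 'rV[R[i]]_n = C^n gets its usual
   normed C-vector space structure and C-differentiability = holomorphy. *)
HB.instance Definition _ (R : realType) := PseudoPointedMetric.copy R[i] R[i]^o.
HB.instance Definition _ (R : realType) := NormedModule.copy R[i] R[i]^o.

Section Defs.
Variables (R : realType) (n : nat).
Local Notation C := R[i].
Local Notation Cn := 'rV[C]_n.

Definition cabs (z : C) : R :=
  Num.sqrt (@complex.Re R z ^+ 2 + @complex.Im R z ^+ 2).

Definition holo (W : normedModType C) (D : set Cn) (f : Cn -> W) : Prop :=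
  forall z, D z -> differentiable f z.

Definition is_domain (D : set Cn) : Prop :=
  open D /\ connected D /\ D !=set0.

Definition biholo_auto (D : set Cn) (F : Cn -> Cn) : Prop :=
  (forall z, D z -> D (F z)) /\ holo D F /\
  exists G : Cn -> Cn, (forall z, D z -> D (G z)) /\ holo D G /\
    (forall z, D z -> G (F z) = z) /\ (forall z, D z -> F (G z) = z).

Definition homogeneous (D : set Cn) : Prop :=
  forall a b, D a -> D b -> exists F : Cn -> Cn, biholo_auto D F /\ F a = b.

(* ---- Lebesgue integral over C^n = R^(2n) (iterated, for nonnegative
   integrands; by Tonelli this is the integral w.r.t. Lebesgue measure) ---- *)
Definition set_coord (k : nat) (z : Cn) (w : C) : Cn :=
  \row_(j < n) (if (j : nat) == k then w else z ord0 j).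

Fixpoint iter_int (F : Cn -> \bar R) (m : nat) (z : Cn) : \bar R :=
  match m with
  | 0 => F z
  | m'.+1 => (\int[@lebesgue_measure R]_x \int[@lebesgue_measure R]_y
                 iter_int F m' (set_coord (n - m) z (Complex x y)))%E
  end.

Definition vol_int (F : Cn -> \bar R) : \bar R := iter_int F n 0.

Definition L2sq (D : set Cn) (f : Cn -> C) : \bar R :=
  vol_int (fun w => ((cabs (f w)) ^+ 2 * \1_D w)%:E).

(* Bergman kernel on the diagonal, K(z,z) = sup{|f(z)|^2 : f in A^2(D), ||f||_2 <= 1} *)
Definition bergman_diag (D : set Cn) (z : Cn) : \bar R :=
  ereal_sup [set ((cabs (f z)) ^+ 2)%:E |
               f in [set f : Cn -> C | holo D f /\ (L2sq D f <= 1)%E]].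

Definition log_bergman (D : set Cn) (z : Cn) : R := ln (fine (bergman_diag D z)).

Definition dir_der (g : Cn -> R) (v : Cn) (z : Cn) : R :=
  derive1 (fun t : R => g (z + (t%:C)%C *: v)) 0.

Definition ebasis (j : 'I_n) : Cn := \row_(k < n) (if k == j then 1 else 0).

(* Wirtinger mixed derivative d^2 g / dz_j dzbar_k *)
Definition wirt (g : Cn -> R) (j k : 'I_n) (z : Cn) : C :=
  let ej := ebasis j in let ek := ebasis k in
  let iej := ('i)%C *: ej in let iek := ('i)%C *: ek in
  let D2 v w := dir_der (dir_der g w) v z in
  (((D2 ej ek + D2 iej iek)%:C)%C + ('i)%C * ((D2 ej iek - D2 iej ek)%:C)%C) / 4%:R.

Definition bergman_metric (D : set Cn) (z u : Cn) : C :=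
  \sum_(j < n) \sum_(k < n) wirt (log_bergman D) j k z * u ord0 j * (u ord0 k)^*.

Definition Qf (D : set Cn) (f : Cn -> C) (z : Cn) : \bar R :=
  ereal_sup [set (cabs ('d f z u) / Num.sqrt (@complex.Re R (bergman_metric D z u)))%:E
            | u in [set u : Cn | u != 0]].

Definition beta (D : set Cn) (f : Cn -> C) : \bar R := ereal_sup (Qf D f @` D).

Definition bloch_norm (D : set Cn) (f : Cn -> C) : \bar R :=
  ((cabs (f 0))%:E + beta D f)%E.

Definition bloch (D : set Cn) (f : Cn -> C) : Prop :=
  holo D f /\ (beta D f < +oo)%E.

Definition alg_AD (D : set Cn) (f : Cn -> C) : Prop :=
  {within closure D, continuous f} /\ holo D f.

Definition max_bdry (D : set Cn) (S : set Cn) : Prop :=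
  closed S /\ S `<=` closure D /\
  forall f, alg_AD D f -> forall x, closure D x ->
    exists2 s, S s & cabs (f x) <= cabs (f s).

Definition dist_bdry (D : set Cn) : set Cn := \bigcap_(S in max_bdry D) S.

Definition little_bloch (D : set Cn) (f : Cn -> C) : Prop :=
  bloch D f /\ forall xi, dist_bdry D xi -> Qf D f @ within D (nbhs xi) --> 0%E.

Definition omega (D : set Cn) (z : Cn) : \bar R :=
  ereal_sup [set (cabs (f z))%:E |
     f in [set f | bloch D f /\ f 0 = 0 /\ (bloch_norm D f <= 1)%E]].

Definition omega0 (D : set Cn) (z : Cn) : \bar R :=
  ereal_sup [set (cabs (f z))%:E |
     f in [set f | little_bloch D f /\ f 0 = 0 /\ (bloch_norm D f <= 1)%E]].

Definition is_weight (D : set Cn) (mu : Cn -> R) : Prop :=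
  {within D, continuous mu} /\ forall z, D z -> 0 < mu z.

Definition Hinf_norm (D : set Cn) (mu : Cn -> R) (g : Cn -> C) : \bar R :=
  ereal_sup [set (mu z * cabs (g z))%:E | z in D].

Definition wcomp (psi : Cn -> C) (phi : Cn -> Cn) (f : Cn -> C) : Cn -> C :=
  fun z => psi z * f (phi z).

Definition wcomp_bounded (D : set Cn) (mu : Cn -> R) psi phi : Prop :=
  exists M : R, forall f, bloch D f ->
    (Hinf_norm D mu (wcomp psi phi f) <= M%:E * bloch_norm D f)%E.

Definition wcomp_norm (D : set Cn) (mu : Cn -> R) psi phi : \bar R :=
  ereal_sup [set Hinf_norm D mu (wcomp psi phi f) |
     f in [set f | bloch D f /\ (bloch_norm D f <= 1)%E]].

Definition upsilon (D : set Cn) (mu : Cn -> R) psi phi : \bar R :=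
  ereal_sup [set ((mu z * cabs (psi z))%:E * omega D (phi z))%E | z in D].

Definition upsilon0 (D : set Cn) (mu : Cn -> R) psi phi : \bar R :=
  ereal_sup [set ((mu z * cabs (psi z))%:E * omega0 D (phi z))%E | z in D].

End Defs.

From HB Require Import structures.
From mathcomp Require Import all_boot all_order all_algebra.
From mathcomp Require Import all_classical all_reals all_analysis.
From mathcomp Require Import complex.
Import Order.TTheory GRing.Theory Num.Theory.
Import numFieldTopology.Exports numFieldNormedType.Exports.
Local Open Scope ring_scope.
Local Open Scope classical_set_scope.

(* Both inequalities hold pointwise before taking suprema.  A little Bloch
   function is a Bloch function, so omega0 <= omega.  For f in the unit ball
   of the Bloch space, mu(z) |psi(z)| |f(phi(z))| is one of the values whose
   supremum is ||W f|| <= ||W||; taking the supremum over f gives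
   mu(z) |psi(z)| omega(phi(z)) <= ||W||. *)

Lemma cabsE (R : realType) (z : R[i]) : cabs z = Normc.normc z.
Proof. by case: z. Qed.

Lemma cabsM (R : realType) (a b : R[i]) : cabs (a * b) = cabs a * cabs b.
Proof. by rewrite !cabsE Normc.normcM. Qed.

Lemma cabs0 (R : realType) : cabs (0 : R[i]) = 0.
Proof. by rewrite cabsE Normc.normc0. Qed.

Lemma cabs_ge0 (R : realType) (z : R[i]) : 0 <= cabs z.
Proof. exact: sqrtr_ge0. Qed.

Section WeightedComposition.
Variables (R : realType) (n : nat) (D : set 'rV[R[i]]_n).
Local Notation Cn := 'rV[R[i]]_n.
Local Notation zero_fun := (fun _ : Cn => 0 : R[i]).

Lemma beta_cst0 : (beta D zero_fun <= 0)%E.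
Proof.
apply: ge_ereal_sup => _ [z Dz <-]; apply: ge_ereal_sup => _ [u _ <-].
by rewrite (diff_cst (V := Cn) (0 : R[i]) z) /= cabs0 mul0r.
Qed.

Lemma bloch_cst0 : bloch D zero_fun.
Proof.
split; first by move=> z _; exact: (differentiable_cst (V := Cn) (0 : R[i]) z).
exact: le_lt_trans beta_cst0 _.
Qed.

Lemma bloch_norm_cst0 : (bloch_norm D zero_fun <= 1)%E.
Proof. by rewrite /bloch_norm cabs0 add0e (le_trans beta_cst0) ?lee01. Qed.

Lemma omega0_le_omega (z : Cn) : (omega0 D z <= omega D z)%E.
Proof. by apply: ereal_sup_le => _ [f [[bf _] f0_norm] <-]; exists f. Qed.

Variables (mu : Cn -> R) (psi : Cn -> R[i]) (phi : Cn -> Cn).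

Lemma wcomp_norm_ge_value {f : Cn -> R[i]} {z : Cn} :
  bloch D f -> (bloch_norm D f <= 1)%E -> D z ->
  (((mu z * cabs (psi z)) * cabs (f (phi z)))%:E <= wcomp_norm D mu psi phi)%E.
Proof.
move=> bf f_norm Dz.
apply: le_trans (ereal_sup_ubound _); last by exists f.
apply: le_trans (ereal_sup_ubound _); last by exists z.
by rewrite /wcomp cabsM mulrA.
Qed.

Lemma wcomp_norm_ge0 {z : Cn} :
  D z -> (0 <= wcomp_norm D mu psi phi)%E.
Proof.
move=> Dz.
have := wcomp_norm_ge_value bloch_cst0 bloch_norm_cst0 Dz.
by rewrite cabs0 mulr0.
Qed.

Hypothesis mu_ge0 : forall z, D z -> 0 <= mu z.

Let weight_ge0 z : D z -> 0 <= mu z * cabs (psi z).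
Proof. by move=> Dz; rewrite mulr_ge0 ?cabs_ge0 ?mu_ge0. Qed.

Lemma upsilon0_le_upsilon :
  (upsilon0 D mu psi phi <= upsilon D mu psi phi)%E.
Proof.
apply: ge_ereal_sup => _ [z Dz <-].
apply: le_trans (ereal_sup_ubound _); last by exists z.
by rewrite lee_wpmul2l ?lee_fin ?weight_ge0 ?omega0_le_omega.
Qed.

Lemma upsilon_le_wcomp_norm :
  (upsilon D mu psi phi <= wcomp_norm D mu psi phi)%E.
Proof.
apply: ge_ereal_sup => _ [z Dz <-].
have [->|c_neq0] := eqVneq (mu z * cabs (psi z)) 0.
  by rewrite mul0e (wcomp_norm_ge0 Dz).
have c_gt0 : 0 < mu z * cabs (psi z) by rewrite lt_neqAle eq_sym c_neq0 weight_ge0.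
rewrite -ereal_sup_pZl //.
apply: ge_ereal_sup => _ [_ [f [bf [_ f_norm]] <-] <-].
by rewrite -EFinM wcomp_norm_ge_value.
Qed.

End WeightedComposition.

Theorem lemma3p1 (R : realType) (n : nat) (D : set 'rV[R[i]]_n)
  (mu : 'rV[R[i]]_n -> R) (psi : 'rV[R[i]]_n -> R[i])
  (phi : 'rV[R[i]]_n -> 'rV[R[i]]_n) :
  is_domain D -> bounded_set D -> homogeneous D -> D 0 ->
  is_weight D mu ->
  holo D psi ->
  (forall z, D z -> D (phi z)) -> holo D phi ->
  wcomp_bounded D mu psi phi ->
  (upsilon0 D mu psi phi <= upsilon D mu psi phi)%E /\
  (upsilon D mu psi phi <= wcomp_norm D mu psi phi)%E.
Proof.
move=> _ _ _ _ [_ mu_gt0] _ _ _ _.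
have mu_ge0 z : D z -> 0 <= mu z by move=> Dz; rewrite ltW ?mu_gt0.
by split; [exact: upsilon0_le_upsilon | exact: upsilon_le_wcomp_norm].
Qed.
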